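(* Let $\mu$ be a Borel measure on the Sorgenfrey line $\mathbb R_\ell$ such that there is an open subset $U$ of $\mathbb R_\ell$ with $0<\mu(U)<+\infty$ and $\mu(\{x\})=0$ for every $x\in U$. Then the continuous valuation $\overline\mu$ on $\mathcal Q\mathbb R_\ell$ (with its Scott topology) defined by $\overline\mu(\mathcal U)=\mu(\{x\in\mathbb R:\{x\}\in\mathcal U\})$ for Scott-open $\mathcal U\subseteq\mathcal Q\mathbb R_\ell$ is not point-continuous. In particular, taking $\mu=\lambda$ the Lebesgue measure, $\overline\lambda$ is not point-continuous.
   Context: The Sorgenfrey line $\mathbb R_\ell$ is the set of reals with the topology generated by the half-open intervals $[a,b[$, $a<b$; its Borel $\sigma$-algebra coincides with that of the usual real line. $\mathcal Q\mathbb R_\ell$ denotes the set of non-empty compact subsets of $\mathbb R_\ell$, ordered by reverse inclusion $\supseteq$; it is a dcpo (directed suprema are intersections), and it carries its Scott topology. For a Scott-open $\mathcal U$, the set $\{x\in\mathbb R:\{x\}\in\mathcal U\}$ is open in $\mathbb R_\ell$, so $\overline\mu$ is well-defined. A valuation on a space $X$ is a map $\nu:\mathcal OX\to[0,\infty]$ that is strict, monotone and modular; it is continuous if it preserves directed suprema of opens. A valuation $\nu$ is point-continuous if for every open $U$ and every real $r$ with $0\le r<\nu(U)$ there is a finite subset $A\subseteq U$ such that $\nu(V)>r$ for every open $V\supseteq A$. *)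

From HB Require Import structures.
From mathcomp Require Import all_boot all_order all_algebra.
From mathcomp Require Import all_classical all_reals all_analysis.
Set Implicit Arguments. Unset Strict Implicit. Unset Printing Implicit Defensive.
Import Order.TTheory GRing.Theory Num.Theory.
Local Open Scope classical_set_scope.
Local Open Scope ring_scope.

Section Sorgenfrey.
Variable R : realType.

(* Opens of the Sorgenfrey line: unions of half-open intervals [a,b[,
   i.e. every point x of U has some [x,b[ (x<b) inside U. *)
Definition sorg_open (U : set R) : Prop :=
  forall x, U x -> exists b : R, x < b /\ `[x, b[ `<=` U.

Definition sorg_compact (K : set R) : Prop :=
  forall C : set (set R), (forall V, C V -> sorg_open V) ->
    K `<=` \bigcup_(V in C) V ->
    exists D : set (set R), [/\ finite_set D, D `<=` C & K `<=` \bigcup_(V in D) V].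

Definition inQ (K : set R) : Prop := K !=set0 /\ sorg_compact K.

Definition Qle (K L : set R) : Prop := L `<=` K.

Definition Q_directed (D : set (set R)) : Prop :=
  D `<=` inQ /\ D !=set0 /\
  forall K L, D K -> D L -> exists M, [/\ D M, Qle K M & Qle L M].

Definition Q_lub (D : set (set R)) (s : set R) : Prop :=
  [/\ inQ s, (forall d, D d -> Qle d s) &
      (forall t, inQ t -> (forall d, D d -> Qle d t) -> Qle s t)].

Definition scott_open (UU : set (set R)) : Prop :=
  [/\ UU `<=` inQ,
      (forall K L, UU K -> inQ L -> Qle K L -> UU L) &
      (forall D s, Q_directed D -> Q_lub D s -> UU s -> exists2 d, D d & UU d)].

Definition mubar (mu : set R -> \bar R) (UU : set (set R)) : \bar R :=
  mu [set x | UU [set x]].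

Definition point_continuous (nu : set (set R) -> \bar R) : Prop :=
  forall UU : set (set R), scott_open UU ->
  forall r : R, 0 <= r -> (r%:E < nu UU)%E ->
    exists A : set (set R), [/\ finite_set A, A `<=` UU &
      forall VV, scott_open VV -> A `<=` VV -> (r%:E < nu VV)%E].

End Sorgenfrey.

From HB Require Import structures.
From mathcomp Require Import all_boot all_order all_algebra.
From mathcomp Require Import all_classical all_reals all_analysis.
From mathcomp Require Import lra.
Set Implicit Arguments.
Unset Strict Implicit.
Unset Printing Implicit Defensive.
Import Order.TTheory GRing.Theory Num.Theory numFieldNormedType.Exports.
Local Open Scope classical_set_scope.
Local Open Scope ring_scope.

(* A compact subset K of the Sorgenfrey line has a gap on the left of each of
   its points x (cover K by the increasing opens ]-oo, x - 1/n[ `|` [x, +oo[),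
   hence is countable.  A countable subset of an open U on whose points mu
   vanishes thus lies in a Sorgenfrey-open union of intervals [x, x + d_x[ of
   total measure as small as wanted.  The box {K compact | K `<=` W} of a
   Sorgenfrey-open W is Scott-open, with mubar-measure mu W.  Point-continuity
   at the box of U for the level mu U / 2 would give finitely many compact
   subsets of U; their union K is compact, hence countable, and the box of a
   small open W containing K contains them all, yet has measure <= mu U / 2. *)

Lemma finite_set_ind (T : choiceType) (P : set T -> Prop) :
  P set0 -> (forall A x, P A -> P (x |` A)) ->
  forall A, finite_set A -> P A.
Proof.
move=> P0 PU A fA; rewrite -(fset_setK fA).
suff PS (s : seq T) : P [set x | x \in s] by exact: PS.
elim: s => [|a s IHs].
  by rewrite (_ : [set x | x \in [::]] = set0) //; apply/seteqP; split.
rewrite (_ : [set x | x \in a :: s] = a |` [set x | x \in s]); first exact: PU.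
apply/seteqP; split => x /=; rewrite in_cons.
  by case/orP => [/eqP ->|]; [left|right].
by case=> [->|->]; rewrite ?eqxx ?orbT.
Qed.

Lemma finite_subset_range_nondecreasing (T : Type) (V : nat -> set T) :
  {homo V : n m / (n <= m)%N >-> n `<=` m} ->
  forall F, finite_set F -> F `<=` range V ->
  exists N, \bigcup_(W in F) W `<=` V N.
Proof.
move=> Vnd; apply: finite_set_ind => [_|F W IHF FWV].
  by exists 0%N => x [].
have [N FN] := IHF (fun Z FZ => FWV Z (or_intror FZ)).
have [k _ Wk] := FWV W (or_introl erefl).
exists (maxn N k) => x [Z [->|FZ] Zx].
  by apply: (Vnd k); [exact: leq_maxr | rewrite Wk].
by apply: (Vnd N); [exact: leq_maxl | apply: FN; exists Z].
Qed.

Section SorgenfreyLine.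
Variable R : realType.
Implicit Types (U W K : set R) (D G : set (set R)) (x y a b : R).

Lemma invrSn_nonincreasing :
  {homo (fun n : nat => (n.+1%:R : R)^-1) : n m / (n <= m)%N >-> m <= n}.
Proof. by move=> n m nm; rewrite lef_pV2 ?posrE ?ltr0Sn // ler_nat. Qed.

Lemma sorg_openP U : sorg_open U <->
  forall x, U x -> exists b, x < b /\ forall y, x <= y -> y < b -> U y.
Proof.
split=> oU x Ux; have [b [xb bU]] := oU x Ux; exists b; split => //.
  by move=> y xy yb; apply: bU; rewrite /= in_itv /= xy yb.
by move=> y /=; rewrite in_itv /= => /andP[]; exact: bU.
Qed.

Lemma sorg_open_ltr a : sorg_open [set y | y < a].
Proof. by apply/sorg_openP => x xa; exists a; split => // y _. Qed.

Lemma sorg_open_ger a : sorg_open [set y | a <= y].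
Proof.
apply/sorg_openP => x ax; exists (x + 1); split; first by rewrite ltrDl.
by move=> y xy _ /=; exact: le_trans xy.
Qed.

Lemma sorg_open_itvco a b : sorg_open `[a, b[%classic.
Proof.
apply/sorg_openP => x /=; rewrite in_itv /= => /andP[ax xb].
by exists b; split => // y xy yb /=; rewrite in_itv /= (le_trans ax xy) yb.
Qed.

Lemma sorg_openU U W : sorg_open U -> sorg_open W -> sorg_open (U `|` W).
Proof.
move=> /sorg_openP oU /sorg_openP oW; apply/sorg_openP => x.
by case=> [/oU|/oW] [b [xb bP]]; exists b; split => // y xy yb; [left|right];
  exact: bP.
Qed.

Lemma sorg_compact0 : sorg_compact (@set0 R).
Proof. by move=> C _ _; exists set0; split => //; exact: finite_set0. Qed.

Lemma sorg_compact1 x : sorg_compact [set x].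
Proof.
move=> C _ xC; have [V CV Vx] := xC x erefl.
by exists [set V]; split => [|W ->|y ->]; [exact: finite_set1 | | exists V].
Qed.

Lemma sorg_compactU K1 K2 :
  sorg_compact K1 -> sorg_compact K2 -> sorg_compact (K1 `|` K2).
Proof.
move=> cK1 cK2 C Co KC.
have [D1 [fD1 D1C K1D1]] := cK1 C Co (fun x K1x => KC x (or_introl K1x)).
have [D2 [fD2 D2C K2D2]] := cK2 C Co (fun x K2x => KC x (or_intror K2x)).
exists (D1 `|` D2); split => [|V [/D1C|/D2C] //|x [/K1D1|/K2D2] [V DV Vx]].
- by rewrite finite_setU.
- by exists V => //; left.
- by exists V => //; right.
Qed.

Lemma sorg_compact_bigcup (A : set (set R)) : finite_set A ->
  (forall K, A K -> sorg_compact K) -> sorg_compact (\bigcup_(K in A) K).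
Proof.
move: A; apply: finite_set_ind => [_|A K IHA cAK].
  by rewrite bigcup_set0; exact: sorg_compact0.
rewrite bigcup_setU1; apply: sorg_compactU; first by apply: cAK; left.
by apply: IHA => L AL; apply: cAK; right.
Qed.

Lemma sorg_compact_nondecreasing_cover K (V : nat -> set R) :
  sorg_compact K -> (forall n, sorg_open (V n)) ->
  {homo V : n m / (n <= m)%N >-> n `<=` m} ->
  K `<=` \bigcup_n V n -> exists N, K `<=` V N.
Proof.
move=> cK Vo Vnd KV.
have rangeVo W : range V W -> sorg_open W by case=> n _ <-.
have KrangeV : K `<=` \bigcup_(W in range V) W.
  by move=> x /KV [n _ Vnx]; exists (V n) => //; exists n.
have [F [fF FV KF]] := cK (range V) rangeVo KrangeV.
have [N FN] := finite_subset_range_nondecreasing Vnd fF FV.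
by exists N => x /KF /FN.
Qed.

Lemma sorg_compact_left_gap K x : sorg_compact K ->
  exists2 a, a < x & forall y, K y -> a < y -> x <= y.
Proof.
move=> cK; pose V n := [set y | y < x - n.+1%:R^-1] `|` [set y | x <= y].
have [||y Ky|N KV] := @sorg_compact_nondecreasing_cover K V cK.
- by move=> n; apply: sorg_openU; [exact: sorg_open_ltr | exact: sorg_open_ger].
- move=> n m nm y [/= yx|]; last by right.
  by left; apply: (lt_le_trans yx); rewrite lerD2l lerN2 invrSn_nonincreasing.
- have [xy|yx] := leP x y; first by exists 0%N => //; right.
  have [k yk] := ltr_add_invr yx; exists k => //; left => /=.
  by rewrite ltrBrDr.
exists (x - N.+1%:R^-1); first by rewrite ltrBlDr ltrDl.
by move=> y /KV [/= yx ay|// ]; move: (lt_trans yx ay); rewrite ltxx.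
Qed.

Lemma sorg_compact_right_gap K x : sorg_compact K -> ~ K x ->
  exists2 b, x < b & forall y, K y -> x <= y -> b <= y.
Proof.
move=> cK nKx; pose V n := [set y | y < x] `|` [set y | x + n.+1%:R^-1 <= y].
have [||y Ky|N KV] := @sorg_compact_nondecreasing_cover K V cK.
- by move=> n; apply: sorg_openU; [exact: sorg_open_ltr | exact: sorg_open_ger].
- move=> n m nm y [/= yx|/= xy]; first by left.
  by right; apply: le_trans xy; rewrite lerD2l invrSn_nonincreasing.
- have [xy|yx] := leP x y; last by exists 0%N => //; left.
  have {}xy : x < y.
    by rewrite lt_neqAle xy andbT; apply: contra_not_neq nKx => ->.
  by have [k /ltW xky] := ltr_add_invr xy; exists k => //; right.
exists (x + N.+1%:R^-1); first by rewrite ltrDl.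
by move=> y /KV [/= yx xy|// ]; move: (lt_le_trans yx xy); rewrite ltxx.
Qed.

Lemma sorg_compact_openC K : sorg_compact K -> sorg_open (~` K).
Proof.
move=> cK; apply/sorg_openP => x nKx.
have [b xb bP] := sorg_compact_right_gap cK nKx.
by exists b; split => // y xy yb Ky; have := bP y Ky xy; rewrite leNgt yb.
Qed.

Lemma countable_right_isolated (S : set R) :
  (forall x, S x -> exists2 b, x < b & forall y, S y -> y < b -> y <= x) ->
  countable S.
Proof.
move=> isoS.
have /choice[q qP] : forall x, exists q : rat, S x ->
    x < ratr q /\ forall y, S y -> y < ratr q -> y <= x.
  move=> x; have [Sx|nSx] := pselect (S x); last by exists 0%Q => /nSx.
  have [b xb bP] := isoS x Sx.
  have [q] := rat_in_itvoo xb; rewrite in_itv /= => /andP[xq qb].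
  by exists q => _; split => // y Sy yq; exact: bP (lt_trans yq qb).
apply/countable_injP; exists (choice.pickle \o q) => x y /[!inE] Sx Sy.
move=> /(pcan_inj choice.pickleK) qxy; apply/eqP; rewrite eq_le.
apply/andP; split.
- have [_ /(_ x Sx) -> //] := qP y Sy.
  by rewrite -qxy; exact: (qP x Sx).1.
- have [_ /(_ y Sy) -> //] := qP x Sx.
  by rewrite qxy; exact: (qP y Sy).1.
Qed.

Lemma countable_left_isolated (S : set R) :
  (forall x, S x -> exists2 a, a < x & forall y, S y -> a < y -> x <= y) ->
  countable S.
Proof.
move=> isoS; have /countable_injP[f finj] : countable [set y | S (- y)].
  apply: countable_right_isolated => x /isoS[a ax aP].
  exists (- a); first by rewrite ltrNr.
  by move=> y Sy ya; rewrite -lerN2; apply: aP; rewrite // ltrNr.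
apply/countable_injP; exists (f \o -%R) => x y /[!inE] Sx Sy /finj.
by rewrite !inE /= !opprK => /(_ Sx Sy) /oppr_inj.
Qed.

Lemma sorg_compact_countable K : sorg_compact K -> countable K.
Proof.
by move=> cK; apply: countable_left_isolated => x _;
  exact: sorg_compact_left_gap.
Qed.

(* [U] differs from its euclidean interior by a set of points isolated from
   the right. *)
Lemma sorg_open_measurable U :
  sorg_open U -> measurable (U : set (measurableTypeR R)).
Proof.
move=> /sorg_openP oU; rewrite -(setDUK (@interior_subset _ U)).
apply: measurableU.
  apply: measurable_realfun.open_measurable; exact: open_interior.
apply: countable_measurable; first exact: measurable_set1.
apply: countable_right_isolated => x [Ux _]; have [b [xb bU]] := oU x Ux.
exists b => // y [Uy Uy_int] yb; rewrite leNgt; apply/negP => xy; apply: Uy_int.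
have : `]x, b[ `<=` U°.
  rewrite -open_subsetE; last exact: itv_open.
  by move=> z /=; rewrite in_itv /= => /andP[/ltW xz zb]; exact: bU.
by apply; rewrite /= in_itv /= xy yb.
Qed.

Lemma measure_itvco_shrink (mu : {measure set (measurableTypeR R) -> \bar R})
    x b (e : R) :
  x < b -> (mu `[x, b[%classic < +oo)%E -> mu [set x] = 0%E -> 0 < e ->
  exists2 c, x < c <= b & (mu `[x, c[%classic <= e%:E)%E.
Proof.
move=> xb mu_fin mux0 e_gt0.
pose c n := x + (b - x) * n.+1%:R^-1.
pose F n : set (measurableTypeR R) := `[x, c n[%classic.
have xc n : x < c n by rewrite ltrDl mulr_gt0 ?subr_gt0 ?invr_gt0.
have cb n : c n <= b.
  rewrite -lerBrDl; apply: ler_piMr; first by rewrite subr_ge0 ltW.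
  by rewrite invf_le1 ?ler1n.
have Fnoninc : {homo F : n m / (n <= m)%N >-> (m <= n)%O}.
  move=> n m nm; rewrite /F subsetEset => y /=.
  rewrite !in_itv /= => /andP[-> ycm].
  apply: (lt_le_trans ycm); rewrite lerD2l; apply: ler_wpM2l.
    by rewrite subr_ge0 ltW.
  exact: invrSn_nonincreasing.
have F_bigcap : \bigcap_n F n = [set x].
  apply/seteqP; split => [y Fy|_ -> n _]; last first.
    by rewrite /F /= in_itv /= lexx xc.
  have /andP[xy _] : x <= y < c 0%N by have := Fy 0%N I; rewrite /F /= in_itv.
  apply/eqP; rewrite eq_le xy andbT leNgt; apply/negP => xy'.
  have [k] : exists k : nat, 0 + k.+1%:R^-1 < (y - x) / (b - x).
    by apply: ltr_add_invr; rewrite divr_gt0 ?subr_gt0.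
  rewrite add0r ltr_pdivlMr ?subr_gt0 // mulrC => ky.
  have := Fy k I; rewrite /F /c /= in_itv /= => /andP[_].
  by rewrite -ltrBlDl => /(lt_trans ky); rewrite ltxx.
have mF n : measurable (F n) by exact: measurable_itv.
have mFcap : measurable (\bigcap_n F n).
  by rewrite F_bigcap; exact: measurable_set1.
have muF0 : (mu (F 0%N) < +oo)%E.
  apply: le_lt_trans mu_fin; apply: le_measure; rewrite ?inE //.
  by move=> y; rewrite /F /= !in_itv /= => /andP[-> /lt_le_trans ->].
have /(nonincreasing_cvg_mu muF0 mF mFcap Fnoninc)[N _ /(_ N (leqnn N)) muFN] :
    nbhs (mu (\bigcap_n F n)) [set y | (y < e%:E)%E].
  by rewrite F_bigcap mux0; exact: (@nbhs_open_ereal_lt _ 0 (fun=> e)).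
by exists (c N); [rewrite xc cb | exact: ltW].
Qed.

(* The pieces of the cover are indexed by an injection [k : K -> nat], and the
   piece at [x] gets measure at most [r / 2 ^ (k x).+1]. *)
Lemma countable_sorg_open_superset_small
    (mu : {measure set (measurableTypeR R) -> \bar R}) U K (r : R) :
  sorg_open U -> (mu U < +oo)%E -> (forall x, U x -> mu [set x] = 0%E) ->
  countable K -> K `<=` U -> 0 < r ->
  exists W, [/\ sorg_open W, K `<=` W & (mu W <= r%:E)%E].
Proof.
move=> oU muU_fin mu0 /countable_injP[k kinj] KU r_gt0.
pose eps n := r / (2 ^ n.+1)%:R.
have eps_gt0 n : 0 < eps n by rewrite divr_gt0 // ltr0n expn_gt0.
have /choice[c cP] : forall x, exists c, K x ->
    x < c /\ (mu `[x, c[%classic <= (eps (k x))%:E)%E.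
  move=> x; have [Kx|nKx] := pselect (K x); last by exists 0 => /nKx.
  have /sorg_openP/(_ x (KU x Kx))[b [xb bU]] := oU.
  have itvU : `[x, b[ `<=` U.
    by move=> y /=; rewrite in_itv /= => /andP[]; exact: bU.
  have [|c /andP[xc _] muc] := measure_itvco_shrink xb _ (mu0 x (KU x Kx))
    (eps_gt0 (k x)).
    apply: le_lt_trans muU_fin; apply: le_measure; rewrite ?inE //.
    exact: sorg_open_measurable.
  by exists c.
pose J n := \bigcup_(x in [set x | K x /\ k x = n]) `[x, c x[%classic.
have J_small n :
    measurable (J n : set (measurableTypeR R)) /\ (mu (J n) <= (eps n)%:E)%E.
  rewrite /J; have [[x [Kx kxn]]|kn] := pselect (exists x, K x /\ k x = n).
    have -> : [set x | K x /\ k x = n] = [set x].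
      apply/seteqP; split => [y [Ky kyn]|_ ->] //=.
      by apply: kinj; rewrite ?inE // kyn kxn.
    by rewrite bigcup_set1 -kxn; have [_ ->] := cP x Kx.
  rewrite bigcup0 => [|x Kxn]; last by exfalso; apply: kn; exists x.
  by rewrite measure0 lee_fin ltW.
exists (\bigcup_n J n); split.
- apply/sorg_openP => y [n _ [x [Kx _] /=]]; rewrite in_itv /= => /andP[xy ycx].
  exists (c x); split => // z yz zcx; exists (k x) => //; exists x => //=.
  by rewrite in_itv /= (le_trans xy yz) zcx.
- move=> x Kx; exists (k x) => //; exists x => //=.
  by have [xc _] := cP x Kx; rewrite in_itv /= lexx xc.
- have mJ : measurable (\bigcup_n J n : set (measurableTypeR R)).
    by apply: bigcupT_measurable => n; exact: (J_small n).1.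
  apply: le_trans (measure_sigma_subadditive mu (fun n => (J_small n).1) mJ
    (@subset_refl _ _)) _.
  apply: le_trans (epsilon_trick0 xpredT (ltW r_gt0)).
  apply: lee_nneseries => [n _ _|n _]; first exact: measure_ge0.
  exact: (J_small n).2.
Qed.

Definition sorg_box W : set (set R) := [set K | inQ K /\ K `<=` W].

Lemma mubar_box (mu : set R -> \bar R) W : mubar mu (sorg_box W) = mu W.
Proof.
congr mu; apply/seteqP; split => x /=; first by case=> _; apply.
by move=> Wx; split=> [|y ->//]; split; [exists x | exact: sorg_compact1].
Qed.

Lemma Q_lub_bigcap D s y : Q_lub D s -> (forall d, D d -> d y) -> s y.
Proof.
move=> [[[z sz] cs] sD slub] Dy.
have Qsy : inQ (s `|` [set y]).
  by split; [exists z; left | exact: sorg_compactU cs (@sorg_compact1 y)].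
have : Qle s (s `|` [set y]).
  by apply: slub => // d Dd w [/(sD d Dd)|->] //; exact: Dy.
by apply; right.
Qed.

Lemma Q_directed_finite_lb D G : Q_directed D -> finite_set G -> G `<=` D ->
  exists2 e, D e & forall g, G g -> e `<=` g.
Proof.
move=> [_ [[d0 Dd0] Ddir]]; move: G; apply: finite_set_ind => [_|G g IHG gGD].
  by exists d0.
have [e De eG] := IHG (fun h Gh => gGD h (or_intror Gh)).
have [M [DM eM gM]] := Ddir e g De (gGD g (or_introl erefl)).
by exists M => // h [->|/eG]; [exact: gM | exact: subset_trans eM].
Qed.

(* Cover a member [d0] of [D] by [W] and the complements of the members of
   [D]; the finitely many members used have a common lower bound in [D]. *)
Lemma Q_directed_sub_open D W : Q_directed D -> sorg_open W ->
  (forall y, (forall d, D d -> d y) -> W y) -> exists2 e, D e & e `<=` W.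
Proof.
move=> Ddir oW capW; have [DQ [[d0 Dd0] _]] := Ddir.
pose C := W |` (setC @` D).
have Co V : C V -> sorg_open V.
  by case=> [->|[d Dd <-]] //; apply: sorg_compact_openC; exact: (DQ d Dd).2.
have d0C : d0 `<=` \bigcup_(V in C) V.
  move=> y _; have [Wy|nWy] := pselect (W y); first by exists W => //; left.
  have /existsNP[d /not_implyP[Dd dy]] : ~ (forall d, D d -> d y) by move/capW.
  by exists (~` d) => //; right; exists d.
have [F [fF FC d0F]] := (DQ d0 Dd0).2 C Co d0C.
have [||e De eG] := @Q_directed_finite_lb D (d0 |` (setC @` (F `\ W))) Ddir.
- rewrite finite_setU; split; first exact: finite_set1.
  exact/finite_image/finite_setD.
- move=> _ [->//|[V [/FC[-> /(_ erefl) []|[d Dd <-] _] <-]]].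
  by rewrite setCK.
exists e => // z ez; have [V FV Vz] := d0F z (eG d0 (or_introl erefl) z ez).
have [<-//|VW] := pselect (V = W).
have eVC : e `<=` ~` V by apply: eG; right; exists V.
by have := eVC z ez.
Qed.

Lemma scott_open_box W : sorg_open W -> scott_open (sorg_box W).
Proof.
move=> oW; split=> [K [] //|K L [_ KW] QL LK|D s Ddir slub [_ sW]].
  by split=> //; exact: subset_trans LK KW.
have [e De eW] :=
  Q_directed_sub_open Ddir oW (fun y Dy => sW y (Q_lub_bigcap slub Dy)).
by exists e => //; split => //; exact: Ddir.1.
Qed.

Lemma mubar_not_point_continuous
    (mu : {measure set (measurableTypeR R) -> \bar R}) U :
  sorg_open U -> (0 < mu U)%E -> (mu U < +oo)%E ->
  (forall x, U x -> mu [set x] = 0%E) -> ~ point_continuous (mubar mu).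
Proof.
move=> oU muU_gt0 muU_fin mu0 pc.
have [m muUE] : exists m, mu U = m%:E.
  by exists (fine (mu U)); rewrite fineK // ge0_fin_numE.
have m_gt0 : 0 < m by rewrite -lte_fin -muUE.
have half_gt0 : 0 < m / 2 by rewrite divr_gt0.
have half_lt : ((m / 2)%:E < mubar mu (sorg_box U))%E.
  by rewrite mubar_box muUE lte_fin; lra.
have [A [fA AU AP]] := pc _ (scott_open_box oU) _ (ltW half_gt0) half_lt.
pose K := \bigcup_(L in A) L.
have cK : sorg_compact K by apply: sorg_compact_bigcup fA _ => L /AU[[]].
have KU : K `<=` U by move=> x [L /AU[_ LU] /LU].
have [W [oW KW muW]] := countable_sorg_open_superset_small oU muU_fin mu0
  (sorg_compact_countable cK) KU half_gt0.
have AW : A `<=` sorg_box W.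
  by move=> L /[dup] AL /AU[QL _]; split => // x Lx; apply: KW; exists L.
have := AP _ (scott_open_box oW) AW.
by rewrite mubar_box => /lt_le_trans/(_ muW); rewrite ltxx.
Qed.

End SorgenfreyLine.

Theorem theorem4p21 (R : realType) :
  (forall mu : {measure set (measurableTypeR R) -> \bar R},
     (exists U : set R, [/\ sorg_open U, (0 < mu U)%E, (mu U < +oo)%E &
                          forall x, U x -> mu [set x] = 0%E]) ->
     ~ point_continuous (mubar mu)) /\
  ~ point_continuous (mubar (@lebesgue_measure R)).
Proof.
split=> [mu [U [oU muU_gt0 muU_fin mu0]]|].
  exact: mubar_not_point_continuous oU muU_gt0 muU_fin mu0.
have leb01 : lebesgue_measure (`[0, 1[%classic : set R) = 1%E.
  by rewrite lebesgue_measure_itv /= lte_fin ltr01 sube0.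
have leb01_gt0 : (0 < lebesgue_measure (`[0%R, 1%R[%classic : set R))%E.
  by rewrite leb01 lte01.
have leb01_fin : (lebesgue_measure (`[0%R, 1%R[%classic : set R) < +oo)%E.
  by rewrite leb01 ltry.
have leb1 (x : R) : lebesgue_measure [set x] = 0%E.
  by rewrite -set_itv1 lebesgue_measure_itv /= lte_fin ltxx.
(* The remaining goals see [lebesgue_measure] through another instance path,
   so they are closed by conversion, not by rewriting. *)
apply: (@mubar_not_point_continuous _ _ `[0, 1[%classic) => [|||x _].
- exact: sorg_open_itvco.
- exact: leb01_gt0.
- exact: leb01_fin.
- exact: leb1.
Qed.
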